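(* Let $n\in\mathbb{N}$. Two points $A,B\in\mathbb{Q}\cup\{\infty\}$ are neighbours in both $\mathcal{F}$ and $\frac1n\mathcal{F}$ if and only if they can be written in reduced form as $A=\frac{a}{n_1c}$ and $B=\frac{b}{n_2d}$ with $n=n_1n_2$ and $|an_2d-bn_1c|=1$.
   Context: The Farey tessellation $\mathcal{F}$ is the ideal triangulation of the upper half-plane $\mathbb{H}$ whose vertex set is $\mathbb{Q}\cup\{\infty\}$ (with $\infty=\frac10$) and in which two vertices written in reduced form $\frac pq,\frac rs$ are joined by a geodesic edge (are \emph{neighbours} in $\mathcal{F}$) iff $|ps-qr|=1$. $\frac1n\mathcal{F}$ is the image of $\mathcal{F}$ under the isometry $z\mapsto z/n$; thus $A,B$ are neighbours in $\frac1n\mathcal{F}$ iff $nA,nB$ are neighbours in $\mathcal{F}$. *)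

From mathcomp Require Import all_boot all_order all_algebra.
Set Implicit Arguments. Unset Strict Implicit. Unset Printing Implicit Defensive.
Import Order.TTheory GRing.Theory Num.Theory.
Local Open Scope ring_scope.

(* Q ∪ {∞}: [Some x] is the rational x, [None] is ∞ = 1/0. *)
Definition qinf := option rat.

Definition pnum (A : qinf) : int := if A is Some x then numq x else 1.
Definition pden (A : qinf) : int := if A is Some x then denq x else 0.

Definition farey_nbr (A B : qinf) : Prop :=
  `|pnum A * pden B - pden A * pnum B| = 1.

Definition qscale (n : nat) (A : qinf) : qinf :=
  if A is Some x then Some (n%:Q * x) else None.

(* Neighbours in (1/n) F: nA, nB are neighbours in F. *)
Definition farey_nbr_n (n : nat) (A B : qinf) : Prop :=
  farey_nbr (qscale n A) (qscale n B).

(* p/q is a reduced-form expression of A (p, q coprime integers, possibly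
   with q negative; q = 0 means A = ∞). *)
Definition reduced_repr (p q : int) (A : qinf) : Prop :=
  coprimez p q /\
  match A with
  | None => q = 0
  | Some x => q != 0 /\ x = p%:~R / q%:~R
  end.

From mathcomp Require Import all_boot all_order all_algebra.
Import Order.TTheory GRing.Theory Num.Theory.
Local Open Scope ring_scope.
From mathcomp Require Import zify ring.

(* Every reduced expression p/q of a point A of Q ∪ {∞} is the
   canonical one up to a common sign, so the Farey relation |ps - qr| = 1 can
   be tested on ANY reduced expressions of A and B.  Scaling by n = g n' with
   q = g c and gcd(n', c) = 1 turns p/q into the reduced expression (n'p)/c
   of nA.
   (=>) Take g = gcd(n, q), h = gcd(n, s) for the canonical forms p/q, r/s.
   Writing q = g c, s = h d, the reduced forms of nA, nB give the neighbour
   determinant Δ' with g h Δ' = n Δ, where Δ = ps - qr; as |Δ| = |Δ'| = 1 we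
   get n = g h, and A = p/(g c), B = r/(h d) is the required factorisation.
   (<=) If |a n2 d - b n1 c| = 1, then n2 is coprime to c and n1 to d, so
   (n2 a)/c and (n1 b)/d are reduced forms of nA and nB; both Farey
   determinants are then ±(a n2 d - b n1 c). *)

Lemma repr_sign (p q : int) (A : qinf) : reduced_repr p q A ->
  exists e : int, `|e| = 1 /\ p = e * pnum A /\ q = e * pden A.
Proof.
case: A => [x|] [cop H] /=.
- case: H => qn0 ->.
  have cop' : coprime `|p| `|q| by rewrite -coprimezE.
  rewrite coprimeq_num // coprimeq_den // (negbTE qn0).
  exists (Num.sg q); split; first by rewrite normr_sg qn0.
  split; last exact: numEsg.
  by rewrite mulrA -expr2 sqr_sg qn0 mulr1n mul1r.
- move: cop; rewrite H /coprimez gcdz0 => /eqP hp.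
  by exists p; rewrite mulr1 mulr0 -hp.
Qed.

Lemma repr_canon (A : qinf) : reduced_repr (pnum A) (pden A) A.
Proof.
case: A => [x|] /=; split => //.
- by rewrite coprimezE coprime_num_den.
- by rewrite denq_neq0 divq_num_den.
Qed.

Lemma nbr_repr {p q r s : int} {A B : qinf} :
  reduced_repr p q A -> reduced_repr r s B ->
  (farey_nbr A B <-> `|p * s - q * r| = 1).
Proof.
move=> /repr_sign [e1 [h1 [-> ->]]] /repr_sign [e2 [h2 [-> ->]]].
rewrite /farey_nbr.
have -> : e1 * pnum A * (e2 * pden B) - e1 * pden A * (e2 * pnum B)
  = (e1 * e2) * (pnum A * pden B - pden A * pnum B) by ring.
by rewrite !normrM h1 h2 !mul1r.
Qed.

Lemma scale_repr {n : nat} {p q g n' c : int} {A : qinf} :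
  reduced_repr p q A -> n%:Z = g * n' -> q = g * c -> coprimez n' c ->
  g != 0 -> reduced_repr (n' * p) c (qscale n A).
Proof.
move=> [cop H] hn hq cnc gn0.
have cpc : coprimez p c by move: cop; rewrite hq coprimezMr => /andP[].
split; first by rewrite coprimezMl cnc cpc.
case: A H => [x [qn0 ->]|q0] /=.
- have cn0 : c != 0 by apply: contraNneq qn0 => c0; rewrite hq c0 mulr0.
  split => //; rewrite hn hq !intrM.
  have gn0' : (g%:~R : rat) != 0 by rewrite intr_eq0.
  have cn0' : (c%:~R : rat) != 0 by rewrite intr_eq0.
  by field; rewrite gn0' cn0'.
- by move: q0; rewrite hq => /eqP; rewrite mulf_eq0 (negbTE gn0) => /eqP.
Qed.

Lemma gcd_cofactors (m : nat) (q : int) : (0 < m)%N ->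
  let g := gcdn m `|q| in
  [/\ g%:Z != 0, m%:Z = g%:Z * (m%:Z %/ g)%Z, q = g%:Z * (q %/ g)%Z
    & coprimez (m%:Z %/ g)%Z (q %/ g)%Z].
Proof.
move=> m0 g; have -> : g%:Z = gcdz m q by [].
have gn0 : gcdz m q != 0 by rewrite gcdz_eq0 negb_and; apply/orP; left; apply/eqP; lia.
have Em : m%:Z = gcdz m q * (m%:Z %/ gcdz m q)%Z by rewrite mulrC divzK // dvdz_gcdl.
have Eq : q = gcdz m q * (q %/ gcdz m q)%Z by rewrite mulrC divzK // dvdz_gcdr.
split=> //; apply/eqP; apply: (mulIf gn0).
have := mulz_gcdl (m%:Z %/ gcdz m q)%Z (q %/ gcdz m q)%Z (gcdz m q).
by rewrite gez0_abs // ![_ * gcdz m q]mulrC -Em -Eq mulr1 => ->.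
Qed.

Lemma unimodular_coprime (x y z w : int) :
  `|x * y - z * w| = 1 -> coprimez x z.
Proof.
set e := x * y - z * w => he.
have e2 : e * e = 1 by rewrite -expr2 -real_normK ?num_real // he expr1n.
apply/coprimezP; exists (e * y, - (e * w)) => /=.
by rewrite -e2 /e; ring.
Qed.

(* (=>): common neighbours split n as gcd(n, q) * gcd(n, s). *)
Lemma common_nbr_factor (n : nat) (A B : qinf) : (0 < n)%N ->
  farey_nbr A B -> farey_nbr_n n A B ->
  exists (n1 n2 : nat) (a b c d : int),
    n = (n1 * n2)%N /\
    reduced_repr a (n1%:Z * c) A /\
    reduced_repr b (n2%:Z * d) B /\
    `|a * n2%:Z * d - b * n1%:Z * c| = 1.
Proof.
move=> n0 F Fn.
set p := pnum A; set q := pden A; set r := pnum B; set s := pden B.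
have [RA RB] := (repr_canon A, repr_canon B).
have detF : `|p * s - q * r| = 1 by rewrite -(nbr_repr RA RB).
have [gn0 En Eq cop1] := gcd_cofactors n q n0.
have [hn0 Em Es cop2] := gcd_cofactors n s n0.
set g := gcdn n `|q| in gn0 En Eq cop1 *.
set h := gcdn n `|s| in hn0 Em Es cop2 *.
set c := (q %/ g)%Z in Eq cop1; set d := (s %/ h)%Z in Es cop2.
have RA' := scale_repr RA En Eq cop1 gn0.
have RB' := scale_repr RB Em Es cop2 hn0.
have detFn := (nbr_repr RA' RB').1 Fn.
have Egh : n = (g * h)%N.
  have E : g%:Z * h%:Z * ((n%:Z %/ g)%Z * p * d - c * ((n%:Z %/ h)%Z * r))
         = n%:Z * (p * s - q * r).
    transitivity ((g%:Z * (n%:Z %/ g)%Z) * (h%:Z * d) * p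
                  - (g%:Z * c) * (h%:Z * (n%:Z %/ h)%Z) * r); first by ring.
    by rewrite -En -Em -Es -Eq; ring.
  move: (congr1 Num.norm E); rewrite !normrM detFn detF !mulr1 !ger0_norm //.
  by rewrite -PoszM => -[].
exists g, h, p, r, c, d; split; first exact: Egh.
split; first by rewrite -Eq.
split; first by rewrite -Es.
by rewrite -detF Es Eq; congr `|_|; ring.
Qed.

Lemma factor_common_nbr {n n1 n2 : nat} {A B : qinf} {a b c d : int} :
  (0 < n)%N -> n = (n1 * n2)%N ->
  reduced_repr a (n1%:Z * c) A -> reduced_repr b (n2%:Z * d) B ->
  `|a * n2%:Z * d - b * n1%:Z * c| = 1 ->
  farey_nbr A B /\ farey_nbr_n n A B.
Proof.
move=> n0 En RA RB unimod.
split; first by rewrite (nbr_repr RA RB) -unimod; congr `|_|; ring.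
have n1n0 : n1%:Z != 0 by apply/eqP; lia.
have n2n0 : n2%:Z != 0 by apply/eqP; lia.
have c1 : coprimez n2%:Z c.
  apply: (unimodular_coprime _ (a * d) _ (b * n1%:Z)).
  by rewrite -unimod; congr `|_|; ring.
have c2 : coprimez n1%:Z d.
  apply: (unimodular_coprime _ (b * c) _ (a * n2%:Z)).
  by rewrite -unimod -normrN; congr `|_|; ring.
have En' : n%:Z = n1%:Z * n2%:Z by rewrite En PoszM.
have RA' := scale_repr RA En' (erefl _) c1 n1n0.
have RB' := scale_repr RB (etrans En' (mulrC _ _)) (erefl _) c2 n2n0.
by rewrite /farey_nbr_n (nbr_repr RA' RB') -unimod; congr `|_|; ring.
Qed.

Theorem lemma3p7 (n : nat) (A B : qinf) : (0 < n)%N ->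
  (farey_nbr A B /\ farey_nbr_n n A B) <->
  exists (n1 n2 : nat) (a b c d : int),
    n = (n1 * n2)%N /\
    reduced_repr a (n1%:Z * c) A /\
    reduced_repr b (n2%:Z * d) B /\
    `|a * n2%:Z * d - b * n1%:Z * c| = 1.
Proof.
move=> n0; split.
- by case=> F Fn; exact: common_nbr_factor.
- by case=> [n1 [n2 [a [b [c [d [En [RA [RB unimod]]]]]]]]];
    exact: (factor_common_nbr n0 En RA RB unimod).
Qed.
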